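(* For $n\ge2$, the assignment $\lambda_{kl}\mapsto\lambda_{kl}$ ($1\le k\ne l\le n$) defines an injective homomorphism from the virtual pure braid group $VP_n$ into $PL_n\le TVP_n$. In particular, $VP_n$ is isomorphic to the subgroup of $TVP_n$ generated by the elements $\lambda_{kl}$, $1\le k\neq l\le n$.
   Context: For $n\ge 2$, the twisted virtual braid group $TVB_n$ is the group with generators $\sigma_1,\dots,\sigma_{n-1}$, $\rho_1,\dots,\rho_{n-1}$, $\gamma_1,\dots,\gamma_n$ and defining relations: $\sigma_i\sigma_{i+1}\sigma_i=\sigma_{i+1}\sigma_i\sigma_{i+1}$ ($1\le i\le n-2$); $\sigma_i\sigma_j=\sigma_j\sigma_i$ ($|i-j|\ge 2$); $\rho_i^2=1$; $\rho_i\rho_j=\rho_j\rho_i$ ($|i-j|\ge2$); $\rho_i\rho_{i+1}\rho_i=\rho_{i+1}\rho_i\rho_{i+1}$ ($1\le i\le n-2$); $\sigma_i\rho_j=\rho_j\sigma_i$ ($|i-j|\ge 2$); $\rho_i\rho_{i+1}\sigma_i=\sigma_{i+1}\rho_i\rho_{i+1}$ ($1\le i\le n-2$); $\gamma_i^2=1$ and $\gamma_i\gamma_j=\gamma_j\gamma_i$ (all $i,j$); $\gamma_j\rho_i=\rho_i\gamma_j$ and $\gamma_j\sigma_i=\sigma_i\gamma_j$ for $j\notin\{i,i+1\}$; $\rho_i\gamma_i=\gamma_{i+1}\rho_i$ ($1\le i\le n-1$); $\rho_i\sigma_i\rho_i=\gamma_{i+1}\gamma_i\sigma_i\gamma_i\gamma_{i+1}$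 ($1\le i\le n-1$). $TVP_n$ is the kernel of $\varphi_P:TVB_n\to S_n$, $\sigma_i,\rho_i\mapsto(i,i+1)$, $\gamma_j\mapsto e$. In $TVB_n$ define $\lambda_{i,i+1}=\rho_i\sigma_i^{-1}$, $\lambda_{i+1,i}=\rho_i\lambda_{i,i+1}\rho_i$ ($1\le i\le n-1$), and for $1\le i<j-1\le n-1$: $\lambda_{ij}=\rho_{j-1}\cdots\rho_{i+1}\lambda_{i,i+1}\rho_{i+1}\cdots\rho_{j-1}$, $\lambda_{ji}=\rho_{j-1}\cdots\rho_{i+1}\lambda_{i+1,i}\rho_{i+1}\cdots\rho_{j-1}$. $A_n=\langle\gamma_1,\dots,\gamma_n\rangle$; $\psi_P:TVP_n\to A_n$ is the homomorphism with $\lambda_{kl}\mapsto e$, $\gamma_j\mapsto\gamma_j$; $PL_n=\ker\psi_P$. The virtual pure braid group $VP_n$ is the abstract group with generators $\lambda_{ij}$, $1\le i\ne j\le n$, and defining relations $\lambda_{ij}\lambda_{kl}=\lambda_{kl}\lambda_{ij}$ and $\lambda_{ki}\lambda_{kj}\lambda_{ij}=\lambda_{ij}\lambda_{kj}\lambda_{ki}$, where distinct letters denote distinct indices. *)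

From Stdlib Require Import List Arith.
Import ListNotations.

(* A word over an alphabet A: letters (b, a), where b = true means a^{-1}. *)
Definition word (A : Type) := list (bool * A).

Definition winv {A : Type} (w : word A) : word A :=
  rev (map (fun p => (negb (fst p), snd p)) w).

Inductive grp_eq {A : Type} (R : word A -> word A -> Prop) : word A -> word A -> Prop :=
| ge_refl : forall w, grp_eq R w w
| ge_sym : forall u v, grp_eq R u v -> grp_eq R v u
| ge_trans : forall u v x, grp_eq R u v -> grp_eq R v x -> grp_eq R u x
| ge_cancel : forall u v b a, grp_eq R (u ++ (b, a) :: (negb b, a) :: v) (u ++ v)
| ge_rel : forall u v l r, R l r -> grp_eq R (u ++ l ++ v) (u ++ r ++ v).

Inductive tgen := Sg (i : nat) | Rh (i : nat) | Gm (j : nat).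

Definition L (x : tgen) : bool * tgen := (false, x).
Definition Li (x : tgen) : bool * tgen := (true, x).

Definition far (i j : nat) : Prop := i + 2 <= j \/ j + 2 <= i.

Inductive tvb_rel (n : nat) : word tgen -> word tgen -> Prop :=
| r_braid : forall i, 1 <= i -> i <= n - 2 ->
    tvb_rel n [L (Sg i); L (Sg (S i)); L (Sg i)] [L (Sg (S i)); L (Sg i); L (Sg (S i))]
| r_scomm : forall i j, 1 <= i <= n - 1 -> 1 <= j <= n - 1 -> far i j ->
    tvb_rel n [L (Sg i); L (Sg j)] [L (Sg j); L (Sg i)]
| r_rsq : forall i, 1 <= i <= n - 1 -> tvb_rel n [L (Rh i); L (Rh i)] []
| r_rcomm : forall i j, 1 <= i <= n - 1 -> 1 <= j <= n - 1 -> far i j ->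
    tvb_rel n [L (Rh i); L (Rh j)] [L (Rh j); L (Rh i)]
| r_rbraid : forall i, 1 <= i -> i <= n - 2 ->
    tvb_rel n [L (Rh i); L (Rh (S i)); L (Rh i)] [L (Rh (S i)); L (Rh i); L (Rh (S i))]
| r_srcomm : forall i j, 1 <= i <= n - 1 -> 1 <= j <= n - 1 -> far i j ->
    tvb_rel n [L (Sg i); L (Rh j)] [L (Rh j); L (Sg i)]
| r_mixed : forall i, 1 <= i -> i <= n - 2 ->
    tvb_rel n [L (Rh i); L (Rh (S i)); L (Sg i)] [L (Sg (S i)); L (Rh i); L (Rh (S i))]
| r_gsq : forall i, 1 <= i <= n -> tvb_rel n [L (Gm i); L (Gm i)] []
| r_gcomm : forall i j, 1 <= i <= n -> 1 <= j <= n ->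
    tvb_rel n [L (Gm i); L (Gm j)] [L (Gm j); L (Gm i)]
| r_grcomm : forall i j, 1 <= i <= n - 1 -> 1 <= j <= n -> j <> i -> j <> S i ->
    tvb_rel n [L (Gm j); L (Rh i)] [L (Rh i); L (Gm j)]
| r_gscomm : forall i j, 1 <= i <= n - 1 -> 1 <= j <= n -> j <> i -> j <> S i ->
    tvb_rel n [L (Gm j); L (Sg i)] [L (Sg i); L (Gm j)]
| r_rg : forall i, 1 <= i <= n - 1 ->
    tvb_rel n [L (Rh i); L (Gm i)] [L (Gm (S i)); L (Rh i)]
| r_twist : forall i, 1 <= i <= n - 1 ->
    tvb_rel n [L (Rh i); L (Sg i); L (Rh i)]
              [L (Gm (S i)); L (Gm i); L (Sg i); L (Gm i); L (Gm (S i))].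

Definition tvb_eq (n : nat) : word tgen -> word tgen -> Prop := grp_eq (tvb_rel n).

(* The permutation phi_P : TVB_n -> S_n, sigma_i, rho_i |-> (i,i+1), gamma_j |-> e,
   applied to a point m (transpositions are involutions, so inverses act alike). *)
Definition tswap (i m : nat) : nat :=
  if Nat.eqb m i then S i else if Nat.eqb m (S i) then i else m.

Definition gen_act (x : tgen) (m : nat) : nat :=
  match x with Sg i => tswap i m | Rh i => tswap i m | Gm _ => m end.

Definition perm_act (w : word tgen) (m : nat) : nat :=
  fold_right (fun p m => gen_act (snd p) m) m w.

(* w represents an element of TVP_n = ker phi_P *)
Definition in_TVP (n : nat) (w : word tgen) : Prop :=
  forall m, 1 <= m <= n -> perm_act w m = m.

(* lambda_{i,i+1} = rho_i sigma_i^{-1} *)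
Definition lam_up (i : nat) : word tgen := [L (Rh i); Li (Sg i)].
(* lambda_{i+1,i} = rho_i lambda_{i,i+1} rho_i *)
Definition lam_down (i : nat) : word tgen := [L (Rh i)] ++ lam_up i ++ [L (Rh i)].
(* rho_{j-1} ... rho_{i+1} *)
Definition rhoseq (i j : nat) : word tgen :=
  map (fun k => L (Rh k)) (rev (seq (S i) (j - S i))).

Definition lam (k l : nat) : word tgen :=
  if k <? l then rhoseq k l ++ lam_up k ++ rev (rhoseq k l)
  else rhoseq l k ++ lam_down l ++ rev (rhoseq l k).

(* generator (i, j) stands for lambda_{ij} *)
Definition vgen := (nat * nat)%type.
Definition V (i j : nat) : bool * vgen := (false, (i, j)).

Definition idx (n i : nat) : Prop := 1 <= i <= n.

Inductive vp_rel (n : nat) : word vgen -> word vgen -> Prop :=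
| v_comm : forall i j k l, idx n i -> idx n j -> idx n k -> idx n l ->
    i <> j -> i <> k -> i <> l -> j <> k -> j <> l -> k <> l ->
    vp_rel n [V i j; V k l] [V k l; V i j]
| v_yb : forall i j k, idx n i -> idx n j -> idx n k ->
    i <> j -> i <> k -> j <> k ->
    vp_rel n [V k i; V k j; V i j] [V i j; V k j; V k i].

Definition vp_eq (n : nat) : word vgen -> word vgen -> Prop := grp_eq (vp_rel n).

Definition vp_valid (n : nat) (w : word vgen) : Prop :=
  forall b i j, In (b, (i, j)) w -> idx n i /\ idx n j /\ i <> j.

Definition phi (w : word vgen) : word tgen :=
  flat_map (fun p : bool * vgen => let '(b, (k, l)) := p in
                     if b then winv (lam k l) else lam k l) w.

From Stdlib Require Import List Arith Lia Morphisms Bool FunctionalExtensionality.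
Import ListNotations.

(* Conjugation by rho_m permutes the lambdas: rho_m lambda_{ij} rho_m = lambda_{s(i) s(j)} for the
   transposition s = (m m+1).  A defining relation of VP_n therefore only has to be checked in TVB_n
   for the indices (1,2,3,4), resp. (1,2,3): adjacent transpositions move these to any tuple of
   distinct indices.  Each lambda_{kl} is conjugate to rho_i sigma_i^{-1} by a word in the rhos, so
   its permutation is trivial.

   For injectivity, TVB_n acts on triples (pi, eps, w) of a permutation, a twist vector in Z_2^n and
   a word of VP_n: rho_i and sigma_i permute pi and eps, gamma_j flips eps_j, and
   sigma_i^{-1} = rho_i lambda_{i,i+1} moreover records lambda_{i,i+1} read through pi and eps.
   Every defining relation of TVB_n acts trivially modulo the relations of VP_n, and phi(w) carries
   (id, 0, []) to (id, 0, w); hence phi(w) = phi(w') in TVB_n forces w = w' in VP_n. *)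

Section GroupWords.
Context {A : Type} (R : word A -> word A -> Prop).
Local Notation geq := (grp_eq R).

Lemma grp_eq_ctx u v : geq u v -> forall x y, geq (x ++ u ++ y) (x ++ v ++ y).
Proof.
  induction 1 as [w|u v _ IH|u v w _ IH1 _ IH2|u v b a|u v l r Hlr]; intros x0 y0.
  - apply ge_refl.
  - apply ge_sym, IH.
  - eapply ge_trans; [apply IH1|apply IH2].
  - rewrite <- !app_assoc. simpl. rewrite (app_assoc x0 u), (app_assoc x0 u). apply ge_cancel.
  - rewrite <- !app_assoc, (app_assoc x0 u), (app_assoc x0 u). apply ge_rel, Hlr.
Qed.

Global Instance grp_eq_equivalence : Equivalence geq.
Proof. split; [intro; apply ge_refl | intros ? ?; apply ge_sym | intros ? ? ?; apply ge_trans]. Qed.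

Global Instance grp_eq_app_proper : Proper (geq ==> geq ==> geq) (@app (bool * A)).
Proof.
  intros u u' Hu v v' Hv. transitivity (u' ++ v).
  - exact (grp_eq_ctx _ _ Hu [] v).
  - pose proof (grp_eq_ctx _ _ Hv u' []) as H. rewrite !app_nil_r in H. exact H.
Qed.

Global Instance grp_eq_cons_proper : Proper (eq ==> geq ==> geq) (@cons (bool * A)).
Proof. intros a _ <- u v H. exact (grp_eq_app_proper [a] [a] (ge_refl R _) u v H). Qed.

Lemma grp_eq_rel_l l r t : R l r -> geq (l ++ t) (r ++ t).
Proof. intro H. exact (ge_rel R [] t l r H). Qed.

Lemma winv_app (u v : word A) : winv (u ++ v) = winv v ++ winv u.
Proof. unfold winv. rewrite map_app, rev_app_distr. reflexivity. Qed.

Lemma winv_involutive (u : word A) : winv (winv u) = u.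
Proof.
  unfold winv. rewrite map_rev, rev_involutive, map_map.
  rewrite <- (map_id u) at 2. apply map_ext. intros [b a]. simpl. rewrite negb_involutive. reflexivity.
Qed.

Lemma grp_eq_winv_l u : geq (winv u ++ u) [].
Proof.
  induction u as [|[b a] u IH]; [reflexivity|].
  change (winv ((b, a) :: u)) with (winv u ++ [(negb b, a)]). rewrite <- app_assoc.
  rewrite <- IH at 2. pose proof (ge_cancel R (winv u) u (negb b) a) as H.
  rewrite negb_involutive in H. exact H.
Qed.

Lemma grp_eq_winv_r u : geq (u ++ winv u) [].
Proof. pose proof (grp_eq_winv_l (winv u)) as H. rewrite winv_involutive in H. exact H. Qed.

Lemma grp_eq_cancel_l c u v : geq (c ++ u) (c ++ v) -> geq u v.
Proof.
  intro H. rewrite <- (app_nil_l u), <- (app_nil_l v), <- (grp_eq_winv_l c), <- !app_assoc, H.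
  reflexivity.
Qed.

Lemma grp_eq_rel_winv l r t : R l r -> geq (winv l ++ t) (winv r ++ t).
Proof.
  intro H. apply grp_eq_app_proper; [|reflexivity].
  rewrite <- (app_nil_r (winv l)), <- (grp_eq_winv_r r), <- (grp_eq_rel_l _ _ _ H), app_assoc.
  rewrite grp_eq_winv_l. reflexivity.
Qed.

Lemma grp_eq_winv u v : geq u v -> geq (winv u) (winv v).
Proof.
  induction 1 as [w|u v _ IH|u v w _ IH1 _ IH2|u v b a|u v l r Hlr].
  - reflexivity.
  - symmetry; exact IH.
  - rewrite IH1; exact IH2.
  - change ((b, a) :: (negb b, a) :: v) with ([(b, a); (negb b, a)] ++ v).
    rewrite !winv_app. cbn. rewrite negb_involutive, <- !app_assoc. apply ge_cancel.
  - rewrite !winv_app, <- !app_assoc. apply grp_eq_app_proper; [reflexivity|].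
    apply grp_eq_rel_winv, Hlr.
Qed.

End GroupWords.

Section TVBRelations.
Variable n : nat.
Local Notation teq := (grp_eq (tvb_rel n)).

Lemma rho_sq i t : 1 <= i <= n - 1 -> teq (L (Rh i) :: L (Rh i) :: t) t.
Proof. intro H. exact (grp_eq_rel_l _ _ _ t (r_rsq n i H)). Qed.

Lemma rho_inv i t : 1 <= i <= n - 1 -> teq (Li (Rh i) :: t) (L (Rh i) :: t).
Proof.
  intro H. rewrite <- (rho_sq i t H) at 1.
  exact (ge_cancel (tvb_rel n) [] (L (Rh i) :: t) true (Rh i)).
Qed.

Lemma rho_comm i j t : 1 <= i <= n - 1 -> 1 <= j <= n - 1 -> far i j ->
  teq (L (Rh i) :: L (Rh j) :: t) (L (Rh j) :: L (Rh i) :: t).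
Proof. intros Hi Hj Hf. exact (grp_eq_rel_l _ _ _ t (r_rcomm n i j Hi Hj Hf)). Qed.

Lemma rho_braid i t : 1 <= i -> i <= n - 2 ->
  teq (L (Rh i) :: L (Rh (S i)) :: L (Rh i) :: t) (L (Rh (S i)) :: L (Rh i) :: L (Rh (S i)) :: t).
Proof. intros H1 H2. exact (grp_eq_rel_l _ _ _ t (r_rbraid n i H1 H2)). Qed.

Lemma sigma_inv_rho_comm i j t : 1 <= i <= n - 1 -> 1 <= j <= n - 1 -> far i j ->
  teq (Li (Sg i) :: L (Rh j) :: t) (L (Rh j) :: Li (Sg i) :: t).
Proof.
  intros Hi Hj Hf. pose proof (grp_eq_rel_winv _ _ _ t (r_srcomm n i j Hi Hj Hf)) as H. simpl in H.
  rewrite <- (rho_inv j), <- (rho_inv j (Li (Sg i) :: t)) by lia. symmetry. exact H.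
Qed.

Lemma sigma_inv_comm i j t : 1 <= i <= n - 1 -> 1 <= j <= n - 1 -> far i j ->
  teq (Li (Sg i) :: Li (Sg j) :: t) (Li (Sg j) :: Li (Sg i) :: t).
Proof.
  intros Hi Hj Hf. symmetry. exact (grp_eq_rel_winv _ _ _ t (r_scomm n i j Hi Hj Hf)).
Qed.

Lemma sigma_inv_braid i t : 1 <= i -> i <= n - 2 ->
  teq (Li (Sg i) :: Li (Sg (S i)) :: Li (Sg i) :: t) (Li (Sg (S i)) :: Li (Sg i) :: Li (Sg (S i)) :: t).
Proof. intros H1 H2. exact (grp_eq_rel_winv _ _ _ t (r_braid n i H1 H2)). Qed.

Lemma sigma_inv_rho_rho i t : 1 <= i -> i <= n - 2 ->
  teq (Li (Sg i) :: L (Rh (S i)) :: L (Rh i) :: t) (L (Rh (S i)) :: L (Rh i) :: Li (Sg (S i)) :: t).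
Proof.
  intros H1 H2. pose proof (grp_eq_rel_winv _ _ _ t (r_mixed n i H1 H2)) as H. simpl in H.
  rewrite !rho_inv in H by lia. exact H.
Qed.

Lemma rho_rho_conj_sigma_inv p t : 1 <= p -> p <= n - 2 ->
  teq (L (Rh p) :: L (Rh (S p)) :: Li (Sg p) :: L (Rh (S p)) :: L (Rh p) :: t) (Li (Sg (S p)) :: t).
Proof.
  intros H1 H2. rewrite sigma_inv_rho_rho by lia. rewrite !rho_sq by lia. reflexivity.
Qed.

End TVBRelations.

Lemma rhoseq_diag p : rhoseq p (S p) = [].
Proof. unfold rhoseq. rewrite Nat.sub_diag. reflexivity. Qed.

Lemma rhoseq_S p q : p < q -> rhoseq p (S q) = L (Rh q) :: rhoseq p q.
Proof.
  intro H. unfold rhoseq. replace (S q - S p) with (S (q - S p)) by lia.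
  rewrite seq_S, rev_app_distr. simpl. do 3 f_equal. lia.
Qed.

Lemma rhoseq_split_low p q : S p < q -> rhoseq p q = rhoseq (S p) q ++ [L (Rh (S p))].
Proof.
  intro H. unfold rhoseq. replace (q - S p) with (S (q - S (S p))) by lia. simpl. rewrite map_app. reflexivity.
Qed.

Lemma in_rhoseq p q x : In x (rhoseq p q) -> exists k, x = L (Rh k) /\ S p <= k < q.
Proof.
  unfold rhoseq. intro H. apply in_map_iff in H. destruct H as [k [<- Hk]].
  apply in_rev, in_seq in Hk. exists k. split; [reflexivity|lia].
Qed.

Arguments rhoseq : simpl never.

Ltac tswap_cases := unfold tswap; repeat
  match goal with |- context [?a =? ?b] =>
    lazymatch a with context [Nat.eqb] => fail | _ =>
    lazymatch b with context [Nat.eqb] => fail | _ =>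
      destruct (Nat.eqb_spec a b); cbv iota beta end end end; try lia.

Lemma tswap_involutive m x : tswap m (tswap m x) = x.
Proof. tswap_cases. Qed.

Lemma tswap_l i : tswap i i = S i.
Proof. tswap_cases. Qed.

Lemma tswap_r i : tswap i (S i) = i.
Proof. tswap_cases. Qed.

Lemma tswap_other i k : k <> i -> k <> S i -> tswap i k = k.
Proof. intros. tswap_cases. Qed.

Section RhoWords.
Variable n : nat.
Local Notation teq := (grp_eq (tvb_rel n)).

Lemma grp_eq_move_past x r t :
  (forall y, In y r -> forall s, teq (x :: y :: s) (y :: x :: s)) -> teq (x :: r ++ t) (r ++ x :: t).
Proof.
  induction r as [|y r IH]; intro H; simpl; [reflexivity|].
  rewrite H by (left; reflexivity). rewrite IH; [reflexivity|]. intros; apply H; right; assumption.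
Qed.

Definition rho_word (r : word tgen) : Prop :=
  forall y, In y r -> exists k, y = L (Rh k) /\ 1 <= k <= n - 1.

Lemma rho_word_cancel r t : rho_word r -> teq (r ++ rev r ++ t) t.
Proof.
  revert t; induction r as [|a r IH]; intros t H; simpl; [reflexivity|].
  destruct (H a (or_introl eq_refl)) as [k [-> Hk]].
  rewrite <- app_assoc. simpl. rewrite IH by (intros y Hy; apply H; right; exact Hy). apply rho_sq, Hk.
Qed.

Lemma rho_word_rev r : rho_word r -> rho_word (rev r).
Proof. intros H y Hy. apply H, in_rev, Hy. Qed.

Lemma rho_word_cancel_rev r t : rho_word r -> teq (rev r ++ r ++ t) t.
Proof. intro H. rewrite <- (rev_involutive r) at 2. apply rho_word_cancel, rho_word_rev, H. Qed.

Lemma rho_word_rhoseq p q : 1 <= p -> q <= n -> rho_word (rhoseq p q).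
Proof. intros Hp Hq y Hy. destruct (in_rhoseq _ _ _ Hy) as [k [-> Hk]]. exists k. split; [reflexivity|lia]. Qed.

Lemma rho_comm_rhoseq m p q : 1 <= m <= n - 1 -> 1 <= p -> q <= n -> m + 1 <= p \/ q + 1 <= m ->
  forall y, In y (rhoseq p q) -> forall s, teq (L (Rh m) :: y :: s) (y :: L (Rh m) :: s).
Proof.
  intros Hm Hp Hq Hf y Hy s. destruct (in_rhoseq _ _ _ Hy) as [k [-> Hk]].
  apply rho_comm; unfold far; lia.
Qed.

Lemma rho_rhoseq_comm m p q t : 1 <= m <= n - 1 -> 1 <= p -> q <= n -> m + 1 <= p \/ q + 1 <= m ->
  teq (L (Rh m) :: rhoseq p q ++ t) (rhoseq p q ++ L (Rh m) :: t).
Proof. intros. apply grp_eq_move_past, rho_comm_rhoseq; assumption. Qed.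

Lemma rho_rev_rhoseq_comm m p q t : 1 <= m <= n - 1 -> 1 <= p -> q <= n -> m + 1 <= p \/ q + 1 <= m ->
  teq (L (Rh m) :: rev (rhoseq p q) ++ t) (rev (rhoseq p q) ++ L (Rh m) :: t).
Proof.
  intros. apply grp_eq_move_past. intros y Hy. apply in_rev in Hy. revert y Hy.
  apply rho_comm_rhoseq; assumption.
Qed.

Lemma rho_rhoseq_shift d m p t : 1 <= p -> p + 1 <= m -> m + 2 + d <= n ->
  teq (L (Rh m) :: rhoseq p (m + 2 + d) ++ t) (rhoseq p (m + 2 + d) ++ L (Rh (S m)) :: t).
Proof.
  revert m t; induction d as [|d IH]; intros m t Hp Hm Hn.
  - replace (m + 2 + 0) with (S (S m)) by lia.
    rewrite !rhoseq_S by lia. simpl. rewrite rho_braid by lia.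
    rewrite (rho_rhoseq_comm (S m) p m) by lia. reflexivity.
  - replace (m + 2 + S d) with (S (m + 2 + d)) by lia.
    rewrite rhoseq_S by lia. simpl. rewrite rho_comm by (unfold far; lia). rewrite IH by lia. reflexivity.
Qed.

Lemma rho_rev_rhoseq_shift d m p t : 1 <= p -> p + 1 <= m -> m + 2 + d <= n ->
  teq (L (Rh (S m)) :: rev (rhoseq p (m + 2 + d)) ++ t) (rev (rhoseq p (m + 2 + d)) ++ L (Rh m) :: t).
Proof.
  intros Hp Hm Hn. set (r := rhoseq p (m + 2 + d)).
  assert (Hr : rho_word r) by (apply rho_word_rhoseq; lia).
  rewrite <- (rho_word_cancel r t Hr) at 2. unfold r. rewrite app_comm_cons, rho_rhoseq_shift by lia. fold r.
  rewrite app_comm_cons, !app_assoc, <- (app_assoc (rev r) r), rho_word_cancel_rev by exact Hr.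
  reflexivity.
Qed.

End RhoWords.

Definition lam_base (b : bool) (p : nat) : word tgen := if b then lam_down p else lam_up p.

(* [lam_at false p q] is lambda_{pq} and [lam_at true p q] is lambda_{qp}, for p < q. *)
Definition lam_at (b : bool) (p q : nat) : word tgen := rhoseq p q ++ lam_base b p ++ rev (rhoseq p q).

Lemma lam_lt p q : p < q -> lam p q = lam_at false p q.
Proof. intro H. unfold lam. rewrite (proj2 (Nat.ltb_lt _ _) H). reflexivity. Qed.

Lemma lam_gt p q : p < q -> lam q p = lam_at true p q.
Proof. intro H. unfold lam. rewrite (proj2 (Nat.ltb_ge _ _)) by lia. reflexivity. Qed.

Section LambdaConjugation.
Variable n : nat.
Local Notation teq := (grp_eq (tvb_rel n)).

Lemma rho_lam_base_comm b m p t : 1 <= m <= n - 1 -> 1 <= p <= n - 1 -> far m p ->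
  teq (L (Rh m) :: lam_base b p ++ t) (lam_base b p ++ L (Rh m) :: t).
Proof.
  intros Hm Hp Hf. apply grp_eq_move_past. intros y Hy s.
  assert (y = L (Rh p) \/ y = Li (Sg p)) as [-> | ->] by (destruct b; simpl in Hy; intuition).
  - apply rho_comm; assumption.
  - symmetry. apply sigma_inv_rho_comm; unfold far in *; lia.
Qed.

Lemma rho_rho_conj_lam_base b p t : 1 <= p -> p <= n - 2 ->
  teq (L (Rh p) :: L (Rh (S p)) :: lam_base b p ++ L (Rh (S p)) :: L (Rh p) :: t) (lam_base b (S p) ++ t).
Proof.
  intros H1 H2. destruct b; simpl.
  - rewrite (rho_sq n p), rho_braid, rho_rho_conj_sigma_inv, (rho_sq n (S p)) by lia. reflexivity.
  - rewrite rho_braid, rho_rho_conj_sigma_inv by lia. reflexivity.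
Qed.

Lemma rho_conj_lam_base b p t : 1 <= p <= n - 1 ->
  teq (L (Rh p) :: lam_base b p ++ L (Rh p) :: t) (lam_base (negb b) p ++ t).
Proof. intro H. destruct b; simpl; [rewrite !rho_sq by lia|]; reflexivity. Qed.

Lemma rho_conj_lam_at_fixed b m p q t : 1 <= m <= n - 1 -> 1 <= p -> p < q -> q <= n ->
  m + 2 <= p \/ q + 1 <= m \/ (p + 1 <= m /\ m + 2 <= q) ->
  teq (L (Rh m) :: lam_at b p q ++ L (Rh m) :: t) (lam_at b p q ++ t).
Proof.
  intros Hm Hp Hpq Hq Hc. unfold lam_at. rewrite <- !app_assoc.
  destruct Hc as [Hc|[Hc|[Hc1 Hc2]]].
  1,2: rewrite rho_rhoseq_comm, rho_lam_base_comm, rho_rev_rhoseq_comm, rho_sq by (unfold far; lia);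
       reflexivity.
  replace q with (m + 2 + (q - m - 2)) by lia.
  rewrite rho_rhoseq_shift, rho_lam_base_comm, rho_rev_rhoseq_shift, rho_sq by (unfold far; lia).
  reflexivity.
Qed.

Lemma rho_conj_lam_at_up_right b p q t : 1 <= p -> p < q -> q <= n - 1 ->
  teq (L (Rh q) :: lam_at b p q ++ L (Rh q) :: t) (lam_at b p (S q) ++ t).
Proof. intros. unfold lam_at. rewrite rhoseq_S by lia. simpl. rewrite <- !app_assoc. reflexivity. Qed.

Lemma rho_conj_lam_at_down_right b p q t : 1 <= p -> p < q -> S q <= n ->
  teq (L (Rh q) :: lam_at b p (S q) ++ L (Rh q) :: t) (lam_at b p q ++ t).
Proof.
  intros. unfold lam_at. rewrite rhoseq_S by lia. simpl. rewrite <- !app_assoc. simpl.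
  rewrite !rho_sq by lia. reflexivity.
Qed.

Lemma rho_conj_lam_at_flip b p t : 1 <= p <= n - 1 ->
  teq (L (Rh p) :: lam_at b p (S p) ++ L (Rh p) :: t) (lam_at (negb b) p (S p) ++ t).
Proof. intro. unfold lam_at. rewrite rhoseq_diag. simpl. rewrite !app_nil_r. apply rho_conj_lam_base; assumption. Qed.

Lemma rho_conj_lam_at_up_left b p q t : 1 <= p -> S p < q -> q <= n ->
  teq (L (Rh p) :: lam_at b p q ++ L (Rh p) :: t) (lam_at b (S p) q ++ t).
Proof.
  intros. unfold lam_at. rewrite rhoseq_split_low, rev_app_distr by lia. simpl. rewrite <- !app_assoc. simpl.
  rewrite rho_rhoseq_comm, <- (rho_rev_rhoseq_comm n p (S p) q), rho_rho_conj_lam_base by lia.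
  reflexivity.
Qed.

Lemma rho_conj_lam_at_down_left b p q t : 1 <= p -> S p < q -> q <= n ->
  teq (L (Rh p) :: lam_at b (S p) q ++ L (Rh p) :: t) (lam_at b p q ++ t).
Proof.
  intros. unfold lam_at. rewrite (rhoseq_split_low p q), rev_app_distr by lia. simpl.
  rewrite <- !app_assoc. simpl.
  rewrite rho_rhoseq_comm, <- (rho_rev_rhoseq_comm n p (S p) q) by lia.
  apply grp_eq_app_proper; [reflexivity|].
  rewrite <- (rho_rho_conj_lam_base b p), !rho_sq by lia. reflexivity.
Qed.

Definition lam_or (b : bool) (x y : nat) : word tgen := if b then lam y x else lam x y.

Lemma lam_or_lt b p q : p < q -> lam_or b p q = lam_at b p q.
Proof. intro. destruct b; simpl; [apply lam_gt|apply lam_lt]; assumption. Qed.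

Lemma lam_or_gt b p q : q < p -> lam_or b p q = lam_at (negb b) q p.
Proof. intro. destruct b; simpl; [apply lam_lt|apply lam_gt]; assumption. Qed.

Lemma rho_conj_lam_at b m p q t : 1 <= m <= n - 1 -> 1 <= p -> p < q -> q <= n ->
  teq (L (Rh m) :: lam_at b p q ++ L (Rh m) :: t) (lam_or b (tswap m p) (tswap m q) ++ t).
Proof.
  intros Hm Hp Hpq Hq.
  assert (Hc : m + 2 <= p \/ q + 1 <= m \/ (p + 1 <= m /\ m + 2 <= q) \/ m + 1 = p \/ m = p /\ q = S p
               \/ m = p /\ S p < q \/ m + 1 = q /\ p < m \/ m = q) by lia.
  destruct Hc as [Hc|[Hc|[Hc|[Hc|[[-> ->]|[[-> Hc]|[[Hc1 Hc2]| ->]]]]]]].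
  1-3: rewrite !tswap_other, lam_or_lt by lia; apply rho_conj_lam_at_fixed; lia.
  - replace p with (S m) by lia. rewrite tswap_r, tswap_other, lam_or_lt by lia. apply rho_conj_lam_at_down_left; lia.
  - rewrite tswap_l, tswap_r, lam_or_gt by lia. apply rho_conj_lam_at_flip; lia.
  - rewrite tswap_l, tswap_other, lam_or_lt by lia. apply rho_conj_lam_at_up_left; lia.
  - replace q with (S m) by lia. rewrite tswap_other, tswap_r, lam_or_lt by lia. apply rho_conj_lam_at_down_right; lia.
  - rewrite tswap_other, tswap_l, lam_or_lt by lia. apply rho_conj_lam_at_up_right; lia.
Qed.

Lemma rho_conj_lam m i j t : 1 <= m <= n - 1 -> 1 <= i <= n -> 1 <= j <= n -> i <> j ->
  teq (L (Rh m) :: lam i j ++ L (Rh m) :: t) (lam (tswap m i) (tswap m j) ++ t).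
Proof.
  intros Hm Hi Hj Hij. destruct (Nat.lt_ge_cases i j).
  - rewrite lam_lt by assumption. apply (rho_conj_lam_at false); lia.
  - rewrite lam_gt by lia. apply (rho_conj_lam_at true); lia.
Qed.

End LambdaConjugation.

Definition vrelabel (m : nat) (w : word vgen) : word vgen :=
  map (fun '(b, (i, j)) => (b, (tswap m i, tswap m j))) w.

Lemma phi_app u v : phi (u ++ v) = phi u ++ phi v.
Proof. apply flat_map_app. Qed.

Section Equivariance.
Variable n : nat.
Local Notation teq := (grp_eq (tvb_rel n)).

Lemma rho_conj_lam_winv m i j t : 1 <= m <= n - 1 -> 1 <= i <= n -> 1 <= j <= n -> i <> j ->
  teq (L (Rh m) :: winv (lam i j) ++ L (Rh m) :: t) (winv (lam (tswap m i) (tswap m j)) ++ t).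
Proof.
  intros Hm Hi Hj Hij.
  pose proof (grp_eq_winv _ _ _ (rho_conj_lam n m i j [] Hm Hi Hj Hij)) as H.
  change (L (Rh m) :: lam i j ++ [L (Rh m)]) with ([L (Rh m)] ++ lam i j ++ [L (Rh m)]) in H.
  rewrite !winv_app in H. change (winv [L (Rh m)]) with [Li (Rh m)] in H.
  rewrite <- H. simpl. rewrite <- app_assoc. simpl. rewrite !rho_inv by lia. reflexivity.
Qed.

Lemma phi_vrelabel m w : 1 <= m <= n - 1 -> vp_valid n w ->
  teq (phi (vrelabel m w)) (L (Rh m) :: phi w ++ [L (Rh m)]).
Proof.
  intro Hm. induction w as [|[b [i j]] w IH]; intro Hw.
  - simpl. rewrite rho_sq by lia. reflexivity.
  - destruct (Hw b i j (or_introl eq_refl)) as [Hi [Hj Hij]].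
    simpl. rewrite IH by (intros b' i' j' Hin; apply (Hw b'); right; exact Hin).
    destruct b; [rewrite <- rho_conj_lam_winv by assumption|rewrite <- rho_conj_lam by assumption];
      rewrite <- app_assoc; simpl; rewrite rho_sq by lia; reflexivity.
Qed.

Lemma phi_vrelabel_compat m u v : 1 <= m <= n - 1 -> vp_valid n u -> vp_valid n v ->
  teq (phi u) (phi v) -> teq (phi (vrelabel m u)) (phi (vrelabel m v)).
Proof. intros Hm Hu Hv H. rewrite !phi_vrelabel by assumption. rewrite H. reflexivity. Qed.

End Equivariance.

Section Tuples.
Variable n : nat.

Definition tuple_in (b : nat) (t : list nat) : Prop := Forall (fun x => b <= x <= n) t /\ NoDup t.

Lemma map_tswap_involutive m t : map (tswap m) (map (tswap m) t) = t.
Proof. rewrite map_map. rewrite <- (map_id t) at 2. apply map_ext, tswap_involutive. Qed.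

Lemma tuple_in_tswap b m t : tuple_in b t -> b <= m -> m < n -> tuple_in b (map (tswap m) t).
Proof.
  intros [Hr Hnd] Hb Hm. split.
  - apply Forall_map. revert Hr. apply Forall_impl. intros x Hx. tswap_cases.
  - apply (NoDup_map_inv (tswap m)). rewrite map_tswap_involutive. exact Hnd.
Qed.

Section TupleInduction.
Variables (r b : nat) (Q : list nat -> Prop).
Hypothesis Q_tswap : forall t m, length t = S r -> tuple_in b t -> b <= m -> m < n -> Q t -> Q (map (tswap m) t).

(* Moving the head of a tuple down to b one adjacent transposition at a time. *)
Lemma tuple_ind_head :
  (forall t, length t = r -> tuple_in (S b) t -> Q (b :: t)) ->
  forall d a t, a = b + d -> length t = r -> tuple_in b (a :: t) -> Q (a :: t).
Proof.
  intros Hbase d. induction d as [|d IH]; intros a t Ha Hlen [Hrange Hnd].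
  - rewrite Nat.add_0_r in Ha. subst a. apply Hbase; [exact Hlen|].
    apply Forall_cons_iff in Hrange. apply NoDup_cons_iff in Hnd. destruct Hrange as [_ Hrange].
    split; [|tauto]. apply Forall_forall. intros x Hx.
    assert (x <> b) by (intros ->; tauto). rewrite Forall_forall in Hrange. specialize (Hrange x Hx). lia.
  - assert (Hbd : b + d < n) by (apply Forall_cons_iff in Hrange; lia).
    rewrite <- (map_tswap_involutive (b + d) (a :: t)).
    apply Q_tswap; [rewrite length_map; simpl; congruence| |lia|lia|].
    + apply tuple_in_tswap; [split|..]; assumption || lia.
    + simpl. apply IH; [tswap_cases|rewrite length_map; exact Hlen|].
      apply (tuple_in_tswap b (b + d) (a :: t)); [split|..]; assumption || lia.
Qed.

End TupleInduction.

(* Adjacent transpositions act transitively on repetition-free tuples of length r in [b, n]. *)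
Lemma tuple_ind r : forall b (Q : list nat -> Prop),
  (forall t m, length t = r -> tuple_in b t -> b <= m -> m < n -> Q t -> Q (map (tswap m) t)) ->
  Q (seq b r) -> forall t, length t = r -> tuple_in b t -> Q t.
Proof.
  induction r as [|r IH]; intros b Q HQ Hbase t Hlen Ht.
  - destruct t; [exact Hbase|discriminate].
  - destruct t as [|a t]; [discriminate|]. injection Hlen as Hlen.
    assert (Ha : b <= a) by (destruct Ht as [Hr _]; apply Forall_cons_iff in Hr; lia).
    apply (tuple_ind_head r b Q HQ) with (d := a - b); [|lia|exact Hlen|exact Ht].
    apply (IH (S b) (fun t => Q (b :: t))); [|exact Hbase].
    intros t' m Hl [Hr' Hnd'] Hm Hmn HQt.
    replace (b :: map (tswap m) t') with (map (tswap m) (b :: t')) by (simpl; f_equal; tswap_cases).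
    apply HQ; [simpl; congruence| |lia|lia|exact HQt].
    split.
    + constructor; [lia|]. revert Hr'. apply Forall_impl. intros; lia.
    + constructor; [|exact Hnd']. intro Hin. rewrite Forall_forall in Hr'. specialize (Hr' b Hin). lia.
Qed.

End Tuples.

Section Homomorphism.
Variable n : nat.
Local Notation teq := (grp_eq (tvb_rel n)).

Lemma phi_rel_transport r (lhs rhs : list nat -> word vgen) :
  (forall m t, vrelabel m (lhs t) = lhs (map (tswap m) t)) ->
  (forall m t, vrelabel m (rhs t) = rhs (map (tswap m) t)) ->
  (forall t, length t = r -> tuple_in n 1 t -> vp_valid n (lhs t) /\ vp_valid n (rhs t)) ->
  teq (phi (lhs (seq 1 r))) (phi (rhs (seq 1 r))) ->
  forall t, length t = r -> tuple_in n 1 t -> teq (phi (lhs t)) (phi (rhs t)).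
Proof.
  intros Hl Hr Hvalid Hbase. apply tuple_ind; [|exact Hbase].
  intros t m Hlen Ht Hm Hmn H. rewrite <- Hl, <- Hr.
  destruct (Hvalid t Hlen Ht). apply phi_vrelabel_compat; tauto || lia.
Qed.

Lemma lam_12_34_comm s : 4 <= n -> teq (lam 1 2 ++ lam 3 4 ++ s) (lam 3 4 ++ lam 1 2 ++ s).
Proof.
  intro Hn. unfold lam, rhoseq. simpl.
  rewrite (sigma_inv_rho_comm n 1 3), (sigma_inv_comm n 1 3), (rho_comm n 1 3),
    <- (sigma_inv_rho_comm n 3 1) by (unfold far; lia).
  reflexivity.
Qed.

Lemma lam_123_yang_baxter s : 3 <= n ->
  teq (lam 1 2 ++ lam 1 3 ++ lam 2 3 ++ s) (lam 2 3 ++ lam 1 3 ++ lam 1 2 ++ s).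
Proof.
  intro Hn. unfold lam, rhoseq. simpl.
  apply (grp_eq_cancel_l _ [L (Rh 1); L (Rh 2); L (Rh 1)]). simpl.
  transitivity (Li (Sg 1) :: Li (Sg 2) :: Li (Sg 1) :: s).
  - rewrite (rho_braid n 1), (rho_sq n 2 (Li (Sg 2) :: s)), <- (rho_braid n 1), (rho_sq n 1),
      rho_rho_conj_sigma_inv, <- sigma_inv_braid by lia.
    reflexivity.
  - rewrite (rho_braid n 1), (rho_sq n 2), <- sigma_inv_rho_rho, <- (rho_braid n 1), (rho_sq n 1),
      rho_rho_conj_sigma_inv by lia.
    reflexivity.
Qed.

Ltac tuple_facts H :=
  let Hr := fresh in let Hnd := fresh in
  destruct H as [Hr Hnd]; rewrite !Forall_cons_iff in Hr; rewrite !NoDup_cons_iff in Hnd; simpl in Hnd.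

Ltac solve_vp_valid :=
  let Hin := fresh in
  intros ? ? ? Hin; simpl in Hin; repeat destruct Hin as [Hin|Hin]; try contradiction;
  injection Hin as <- <- <-; unfold idx; lia.

Lemma phi_vp_rel l r : vp_rel n l r -> teq (phi l) (phi r).
Proof.
  destruct 1 as [i j k l Hi Hj Hk Hl|i j k Hi Hj Hk]; unfold idx in *.
  - pose (lhs t := match t with [i; j; k; l] => [V i j; V k l] | _ => [] end).
    pose (rhs t := match t with [i; j; k; l] => [V k l; V i j] | _ => [] end).
    apply (phi_rel_transport 4 lhs rhs) with (t := [i; j; k; l]).
    + intros m [|? [|? [|? [|? [|]]]]]; reflexivity.
    + intros m [|? [|? [|? [|? [|]]]]]; reflexivity.
    + intros [|? [|? [|? [|? [|]]]]] Hlen Ht; try discriminate. tuple_facts Ht.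
      split; solve_vp_valid.
    + change (teq (lam 1 2 ++ lam 3 4 ++ []) (lam 3 4 ++ lam 1 2 ++ [])). apply lam_12_34_comm. lia.
    + reflexivity.
    + split; [repeat constructor; lia|]. repeat constructor; simpl; lia.
  - pose (lhs t := match t with [k; i; j] => [V k i; V k j; V i j] | _ => [] end).
    pose (rhs t := match t with [k; i; j] => [V i j; V k j; V k i] | _ => [] end).
    apply (phi_rel_transport 3 lhs rhs) with (t := [k; i; j]).
    + intros m [|? [|? [|? [|]]]]; reflexivity.
    + intros m [|? [|? [|? [|]]]]; reflexivity.
    + intros [|? [|? [|? [|]]]] Hlen Ht; try discriminate. tuple_facts Ht.
      split; solve_vp_valid.
    + change (teq (lam 1 2 ++ lam 1 3 ++ lam 2 3 ++ []) (lam 2 3 ++ lam 1 3 ++ lam 1 2 ++ [])).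
      apply lam_123_yang_baxter. lia.
    + reflexivity.
    + split; [repeat constructor; lia|]. repeat constructor; simpl; lia.
Qed.

Lemma phi_respects_vp_eq w w' : vp_eq n w w' -> teq (phi w) (phi w').
Proof.
  induction 1 as [w|u v _ IH|u v w _ IH1 _ IH2|u v b [k l]|u v l r Hlr].
  - reflexivity.
  - symmetry; exact IH.
  - rewrite IH1; exact IH2.
  - rewrite !phi_app. simpl. apply grp_eq_app_proper; [reflexivity|]. rewrite app_assoc.
    destruct b; simpl.
    + rewrite <- (winv_involutive (lam k l)) at 2. rewrite grp_eq_winv_r. reflexivity.
    + rewrite grp_eq_winv_r. reflexivity.
  - rewrite !phi_app, (phi_vp_rel _ _ Hlr). reflexivity.
Qed.

End Homomorphism.

Lemma perm_act_app u v m : perm_act (u ++ v) m = perm_act u (perm_act v m).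
Proof. unfold perm_act. rewrite fold_right_app. reflexivity. Qed.

Lemma perm_act_rev_cancel t m : perm_act t (perm_act (rev t) m) = m.
Proof.
  revert m; induction t as [|[b x] t IH]; intro m; [reflexivity|].
  simpl rev. rewrite perm_act_app. simpl. rewrite IH.
  destruct x; simpl; rewrite ?tswap_involutive; reflexivity.
Qed.

Lemma perm_act_winv t m : perm_act (winv t) m = perm_act (rev t) m.
Proof.
  unfold winv. rewrite <- map_rev. induction (rev t) as [|x s IH]; [reflexivity|].
  simpl. rewrite IH. reflexivity.
Qed.

Lemma perm_act_lam k l m : perm_act (lam k l) m = m.
Proof.
  unfold lam. destruct (k <? l); rewrite !perm_act_app; simpl; rewrite ?tswap_involutive;
    apply perm_act_rev_cancel.
Qed.

Lemma perm_act_winv_lam k l m : perm_act (winv (lam k l)) m = m.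
Proof.
  rewrite perm_act_winv. rewrite <- (perm_act_lam k l m) at 1.
  rewrite <- (rev_involutive (lam k l)) at 2. apply perm_act_rev_cancel.
Qed.

Lemma phi_in_TVP n w : in_TVP n (phi w).
Proof.
  intros m _. induction w as [|[[|] [k l]] w IH]; [reflexivity| |];
    simpl; rewrite perm_act_app, IH; [apply perm_act_winv_lam|apply perm_act_lam].
Qed.

Record state := State { st_perm : nat -> nat; st_sign : nat -> bool; st_word : word vgen }.

(* sigma_i^{-1} = rho_i lambda_{i,i+1} records lambda_{i,i+1} read through p; the letter is reversed
   when both strands are twisted and dropped when exactly one is. *)
Definition sigma_letter (p : nat -> nat) (d : nat -> bool) (i : nat) : word vgen :=
  match d i, d (S i) with
  | false, false => [V (p i) (p (S i))]
  | true, true => [V (p (S i)) (p i)]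
  | _, _ => []
  end.

Section Retraction.
Variable n : nat.

Definition adj_index (i : nat) : bool := (1 <=? i) && (i <? n).
Definition strand_index (j : nat) : bool := (1 <=? j) && (j <=? n).

Lemma adj_index_true i : 1 <= i < n -> adj_index i = true.
Proof. intro. unfold adj_index. apply andb_true_intro. rewrite Nat.leb_le, Nat.ltb_lt. lia. Qed.

Lemma adj_index_true_inv i : adj_index i = true -> 1 <= i < n.
Proof. unfold adj_index. rewrite andb_true_iff, Nat.leb_le, Nat.ltb_lt. lia. Qed.

Lemma strand_index_true j : 1 <= j <= n -> strand_index j = true.
Proof. intro. unfold strand_index. apply andb_true_intro. rewrite !Nat.leb_le. lia. Qed.

(* Generators with out-of-range indices act trivially, so that the action is defined on all words. *)
Definition act_letter (s : state) (a : bool * tgen) : state :=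
  let '(State p d w) := s in
  match a with
  | (b, Sg i) =>
      if adj_index i then
        let p' := fun k => p (tswap i k) in let d' := fun k => d (tswap i k) in
        State p' d' (if b then w ++ sigma_letter p' d' i else w ++ winv (sigma_letter p d i))
      else s
  | (_, Rh i) => if adj_index i then State (fun k => p (tswap i k)) (fun k => d (tswap i k)) w else s
  | (_, Gm j) => if strand_index j then State p (fun k => xorb (d k) (k =? j)) w else s
  end.

Definition act_word (t : word tgen) (s : state) : state := fold_left act_letter t s.

Lemma act_word_app u v s : act_word (u ++ v) s = act_word v (act_word u s).
Proof. apply fold_left_app. Qed.

Definition state_eq (s s' : state) : Prop :=
  st_perm s = st_perm s' /\ st_sign s = st_sign s' /\ vp_eq n (st_word s) (st_word s').

Lemma state_eq_refl s : state_eq s s.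
Proof. repeat split; reflexivity. Qed.

Lemma state_eq_sym s s' : state_eq s s' -> state_eq s' s.
Proof. intros [? [? ?]]. repeat split; symmetry; assumption. Qed.

Lemma state_eq_trans s s' s'' : state_eq s s' -> state_eq s' s'' -> state_eq s s''.
Proof. intros [? [? ?]] [? [? ?]]. repeat split; etransitivity; eassumption. Qed.

Lemma act_letter_state_eq s s' a : state_eq s s' -> state_eq (act_letter s a) (act_letter s' a).
Proof.
  destruct s as [p d w], s' as [p' d' w']. intros [Hp [Hd Hw]]; simpl in *; subst p' d'.
  destruct a as [b [i|i|j]]; simpl.
  - destruct (adj_index i); [destruct b|]; repeat split; simpl; rewrite ?Hw; reflexivity.
  - destruct (adj_index i); repeat split; assumption.
  - destruct (strand_index j); repeat split; assumption.
Qed.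

Lemma act_word_state_eq t s s' : state_eq s s' -> state_eq (act_word t s) (act_word t s').
Proof. revert s s'; induction t; intros s s' H; simpl; [exact H|]. apply IHt, act_letter_state_eq, H. Qed.

Definition perm_ok (p : nat -> nat) : Prop :=
  (forall k, 1 <= k <= n -> 1 <= p k <= n) /\
  (forall k l, 1 <= k <= n -> 1 <= l <= n -> p k = p l -> k = l).

Lemma perm_ok_tswap i p : 1 <= i < n -> perm_ok p -> perm_ok (fun k => p (tswap i k)).
Proof.
  intros Hi [Hrange Hinj]. split.
  - intros k Hk. apply Hrange. tswap_cases.
  - intros k l Hk Hl E. apply Hinj in E; [|tswap_cases|tswap_cases].
    rewrite <- (tswap_involutive i k), <- (tswap_involutive i l), E. reflexivity.
Qed.

Lemma act_word_perm_ok t s : perm_ok (st_perm s) -> perm_ok (st_perm (act_word t s)).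
Proof.
  revert s; induction t as [|[b x] t IH]; intros [p d w] H; simpl; [exact H|]. apply IH.
  destruct x as [i|i|j]; simpl in *.
  - destruct (adj_index i) eqn:E; simpl; [apply perm_ok_tswap, H; apply adj_index_true_inv, E|exact H].
  - destruct (adj_index i) eqn:E; simpl; [apply perm_ok_tswap, H; apply adj_index_true_inv, E|exact H].
  - destruct (strand_index j); exact H.
Qed.

End Retraction.

Arguments adj_index : simpl never.
Arguments strand_index : simpl never.
Arguments sigma_letter : simpl never.

Ltac funext_tswap :=
  apply functional_extensionality; let k := fresh "k" in intro k; unfold tswap;
  repeat match goal with |- context [?a =? ?b] =>
    lazymatch a with context [Nat.eqb] => fail | _ =>
    lazymatch b with context [Nat.eqb] => fail | _ =>
      destruct (Nat.eqb_spec a b); cbv iota beta end end end;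
  try (exfalso; lia); rewrite ?xorb_false_r, ?xorb_true_r, ?negb_involutive;
  try reflexivity; try (repeat f_equal; lia).

Ltac simpl_tswap :=
  repeat (rewrite ?tswap_l, ?tswap_r, ?tswap_involutive;
          try match goal with |- context [tswap ?i ?k] => rewrite (tswap_other i k) by lia end).

Ltac simpl_eqb :=
  repeat match goal with |- context [?a =? ?b] =>
    first [rewrite (proj2 (Nat.eqb_neq a b)) by lia | rewrite (proj2 (Nat.eqb_eq a b)) by lia] end;
  rewrite ?xorb_false_r, ?xorb_true_r.

Section RetractionRelations.
Variable n : nat.

Lemma vp_yang_baxter_inv a b c : idx n a -> idx n b -> idx n c -> a <> b -> a <> c -> b <> c ->
  vp_eq n [(true, (a, b)); (true, (a, c)); (true, (b, c))] [(true, (b, c)); (true, (a, c)); (true, (a, b))].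
Proof.
  intros. symmetry.
  exact (grp_eq_winv _ _ _ (ge_rel (vp_rel n) [] [] _ _ (v_yb n b c a ltac:(assumption) ltac:(assumption)
    ltac:(assumption) ltac:(assumption) ltac:(auto) ltac:(auto)))).
Qed.

Lemma vp_comm_inv a b c e : idx n a -> idx n b -> idx n c -> idx n e ->
  a <> b -> a <> c -> a <> e -> b <> c -> b <> e -> c <> e ->
  vp_eq n [(true, (a, b)); (true, (c, e))] [(true, (c, e)); (true, (a, b))].
Proof.
  intros. symmetry.
  exact (grp_eq_winv _ _ _ (ge_rel (vp_rel n) [] [] _ _ (v_comm n a b c e ltac:(assumption)
    ltac:(assumption) ltac:(assumption) ltac:(assumption) ltac:(assumption) ltac:(assumption)
    ltac:(assumption) ltac:(assumption) ltac:(assumption) ltac:(assumption)))).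
Qed.

Lemma perm_ok_idx p k : perm_ok n p -> 1 <= k <= n -> idx n (p k).
Proof. intros [H _] Hk. exact (H k Hk). Qed.

Lemma perm_ok_neq p a b : perm_ok n p -> 1 <= a <= n -> 1 <= b <= n -> a <> b -> p a <> p b.
Proof. intros [_ H] Ha Hb Hab E. exact (Hab (H a b Ha Hb E)). Qed.

Ltac perm_side Hp := match goal with
  | |- idx _ (?p ?x) => apply (perm_ok_idx _ _ Hp); lia
  | |- ?p ?x <> ?p ?y => apply (perm_ok_neq _ _ _ Hp); lia
  end.

Ltac close_vp_word Hp := first
  [ reflexivity
  | apply vp_yang_baxter_inv; perm_side Hp
  | symmetry; apply vp_yang_baxter_inv; perm_side Hp
  | apply vp_comm_inv; perm_side Hp ].

(* After normalizing permutations and signs, the recorded words differ at most by an inverted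
   commutation or Yang-Baxter relation of VP_n. *)
Lemma act_word_tvb_rel l r s : tvb_rel n l r -> perm_ok n (st_perm s) ->
  state_eq n (act_word n l s) (act_word n r s).
Proof.
  destruct s as [p d w]. intros H Hp; simpl in Hp. destruct H; try unfold far in *;
  repeat progress (simpl; rewrite ?adj_index_true, ?strand_index_true by lia);
  unfold state_eq; simpl; refine (conj _ (conj _ _)); try funext_tswap;
  unfold sigma_letter; simpl_tswap; simpl_eqb; rewrite <- ?app_assoc; try reflexivity;
  apply grp_eq_app_proper; try reflexivity;
  repeat match goal with |- context [d ?x] => destruct (d x) end; simpl; close_vp_word Hp.
Qed.

Lemma act_word_cancel b x s : state_eq n (act_word n [(b, x); (negb b, x)] s) s.
Proof.
  destruct s as [p d w]. destruct x as [i|i|j]; simpl.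
  - destruct (adj_index n i) eqn:E; [apply adj_index_true_inv in E; destruct b; simpl;
      rewrite adj_index_true by lia; simpl|].
    + unfold state_eq; simpl; refine (conj _ (conj _ _)); try funext_tswap. rewrite <- app_assoc, grp_eq_winv_r, app_nil_r.
      reflexivity.
    + unfold state_eq; simpl; refine (conj _ (conj _ _)); try funext_tswap. unfold sigma_letter. simpl_tswap.
      rewrite <- app_assoc, grp_eq_winv_l, app_nil_r. reflexivity.
    + destruct b; simpl; rewrite E; apply state_eq_refl.
  - destruct (adj_index n i) eqn:E; [apply adj_index_true_inv in E; simpl; rewrite adj_index_true by lia|].
    + unfold state_eq; simpl; refine (conj _ (conj _ _)); try funext_tswap. reflexivity.
    + simpl; rewrite E; apply state_eq_refl.
  - destruct (strand_index n j) eqn:E; simpl; rewrite E.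
    + unfold state_eq; simpl; refine (conj _ (conj _ _)); try funext_tswap. reflexivity.
    + apply state_eq_refl.
Qed.

Lemma act_word_tvb_eq u v s : grp_eq (tvb_rel n) u v -> perm_ok n (st_perm s) ->
  state_eq n (act_word n u s) (act_word n v s).
Proof.
  intro H. revert s. induction H as [w|u v _ IH|u v w _ IH1 _ IH2|u v b a|u v l r Hlr]; intros s Hs.
  - apply state_eq_refl.
  - apply state_eq_sym, IH, Hs.
  - eapply state_eq_trans; [apply IH1, Hs|apply IH2, Hs].
  - change ((b, a) :: (negb b, a) :: v) with ([(b, a); (negb b, a)] ++ v).
    rewrite !act_word_app. apply act_word_state_eq, act_word_cancel.
  - rewrite !act_word_app. apply act_word_state_eq, act_word_tvb_rel; [exact Hlr|].
    apply act_word_perm_ok, Hs.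
Qed.

End RetractionRelations.

Lemma perm_act_rhoseq_low p q : p < q -> perm_act (rhoseq p q) p = p.
Proof.
  intro H. induction q as [|q IH]; [lia|].
  destruct (Nat.eq_dec q p) as [->|Hqp]; [rewrite rhoseq_diag; reflexivity|].
  rewrite rhoseq_S by lia. simpl. rewrite IH by lia. apply tswap_other; lia.
Qed.

Lemma perm_act_rhoseq_high p q : p < q -> perm_act (rhoseq p q) (S p) = q.
Proof.
  intro H. induction q as [|q IH]; [lia|].
  destruct (Nat.eq_dec q p) as [->|Hqp]; [rewrite rhoseq_diag; reflexivity|].
  rewrite rhoseq_S by lia. simpl. rewrite IH by lia. apply tswap_l.
Qed.

Section RetractionOfPhi.
Variable n : nat.

Lemma act_rho_word r p d w : rho_word n r ->
  act_word n r (State p d w) = State (fun k => p (perm_act r k)) (fun k => d (perm_act r k)) w.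
Proof.
  revert p d; induction r as [|a r IH]; intros p d H; [reflexivity|].
  destruct (H a (or_introl eq_refl)) as [k [-> Hk]].
  simpl. rewrite adj_index_true, IH by (lia || (intros y Hy; apply H; right; exact Hy)).
  reflexivity.
Qed.

Definition base_state (acc : word vgen) : state := State (fun k => k) (fun _ => false) acc.

Lemma perm_ok_base_state acc : perm_ok n (st_perm (base_state acc)).
Proof. split; auto. Qed.

Lemma act_lam k l acc : 1 <= k <= n -> 1 <= l <= n -> k <> l ->
  act_word n (lam k l) (base_state acc) = base_state (acc ++ [V k l]).
Proof.
  intros Hk Hl Hkl. unfold base_state. destruct (Nat.lt_ge_cases k l).
  - rewrite lam_lt by assumption. unfold lam_at, lam_base. rewrite !act_word_app.
    rewrite act_rho_word by (apply rho_word_rhoseq; lia).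
    repeat progress (simpl; rewrite ?adj_index_true by lia).
    rewrite act_rho_word by (apply rho_word_rev, rho_word_rhoseq; lia).
    unfold sigma_letter. simpl. rewrite !tswap_involutive, perm_act_rhoseq_low, perm_act_rhoseq_high by lia.
    f_equal; apply functional_extensionality; intro x; rewrite tswap_involutive; apply perm_act_rev_cancel.
  - rewrite lam_gt by lia. unfold lam_at, lam_base. rewrite !act_word_app.
    rewrite act_rho_word by (apply rho_word_rhoseq; lia).
    repeat progress (simpl; rewrite ?adj_index_true by lia).
    rewrite act_rho_word by (apply rho_word_rev, rho_word_rhoseq; lia).
    unfold sigma_letter. simpl. rewrite !tswap_involutive, tswap_l, tswap_r.
    rewrite perm_act_rhoseq_low, perm_act_rhoseq_high by lia.
    f_equal; apply functional_extensionality; intro x; rewrite !tswap_involutive; apply perm_act_rev_cancel.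
Qed.

(* The action of TVB_n respects its relations, so winv (lam k l) undoes lam k l. *)
Lemma act_winv_lam k l acc : 1 <= k <= n -> 1 <= l <= n -> k <> l ->
  state_eq n (act_word n (winv (lam k l)) (base_state acc)) (base_state (acc ++ [(true, (k, l))])).
Proof.
  intros Hk Hl Hkl. set (acc' := acc ++ [(true, (k, l))]).
  apply (state_eq_trans _ _ (act_word n (winv (lam k l)) (base_state (acc' ++ [V k l])))).
  - apply act_word_state_eq. repeat split. simpl. unfold acc'. rewrite <- app_assoc.
    rewrite <- (app_nil_r acc) at 1. symmetry. apply ge_cancel.
  - rewrite <- act_lam, <- act_word_app by assumption.
    apply (act_word_tvb_eq n _ [] _ (grp_eq_winv_r _ _) (perm_ok_base_state _)).
Qed.

Lemma act_phi w acc : vp_valid n w -> state_eq n (act_word n (phi w) (base_state acc)) (base_state (acc ++ w)).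
Proof.
  revert acc; induction w as [|[b [k l]] w IH]; intros acc Hw.
  - rewrite app_nil_r. apply state_eq_refl.
  - destruct (Hw b k l (or_introl eq_refl)) as [Hk [Hl Hkl]]. unfold idx in Hk, Hl.
    assert (Hw' : vp_valid n w) by (intros b' i j Hin; apply (Hw b'); right; exact Hin).
    change ((b, (k, l)) :: w) with ([(b, (k, l))] ++ w). rewrite phi_app, act_word_app, app_assoc.
    apply (state_eq_trans _ _ (act_word n (phi w) (base_state (acc ++ [(b, (k, l))])))); [|apply IH, Hw'].
    apply act_word_state_eq. destruct b; simpl; rewrite app_nil_r.
    + apply act_winv_lam; assumption.
    + rewrite act_lam by assumption. apply state_eq_refl.
Qed.

End RetractionOfPhi.

Theorem mainTheorem8 (n : nat) (hn : 2 <= n) :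
  (forall w w' : word vgen, vp_valid n w -> vp_valid n w' ->
     vp_eq n w w' -> tvb_eq n (phi w) (phi w')) /\
  (forall w : word vgen, vp_valid n w -> in_TVP n (phi w)) /\
  (forall w w' : word vgen, vp_valid n w -> vp_valid n w' ->
     tvb_eq n (phi w) (phi w') -> vp_eq n w w').
Proof.
  split; [|split].
  - intros w w' _ _. apply phi_respects_vp_eq.
  - intros w _. apply phi_in_TVP.
  - intros w w' Hw Hw' H.
    assert (Hs : state_eq n (base_state w) (base_state w')).
    { apply (state_eq_trans _ _ (act_word n (phi w) (base_state []))).
      { apply state_eq_sym, (act_phi n w []), Hw. }
      apply (state_eq_trans _ _ (act_word n (phi w') (base_state []))).
      { apply act_word_tvb_eq; [exact H|apply perm_ok_base_state]. }
      apply (act_phi n w' []), Hw'. }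
    apply Hs.
Qed.
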